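(* Let $s_j=\sigma_j+it_j\in\mathbb{C}$ ($j=1,2,3$) with $\sigma_1+\sigma_3>1$ and $\sigma_1+\sigma_2+\sigma_3>2$, where $s_1,s_2$ and $\sigma_3$ are fixed and $t_3$ varies. Then $$\int_2^T \left|\zeta_{AV,2}(s_1,s_2,s_3)\right|^2\,dt_3=\zeta_{AV,2}^{[2]}(s_1,s_2,2\sigma_3)\,T+O(1)\qquad (T\to\infty),$$ where the implied constant depends on $s_1,s_2$ and $\sigma_3$.
   Context: Write $s_j=\sigma_j+it_j$ with $\sigma_j,t_j\in\mathbb{R}$; complex powers $n^{s}=e^{s\log n}$ use the real logarithm of positive reals. The Apostol–Vu double zeta-function is $$\zeta_{AV,2}(s_1,s_2,s_3)=\sum_{m=1}^\infty\sum_{n<m}\frac{1}{m^{s_1}n^{s_2}(m+n)^{s_3}},$$ where $n$ runs over positive integers $n<m$; this series converges absolutely for $\sigma_1+\sigma_3>1$, $\sigma_1+\sigma_2+\sigma_3>2$, and $\zeta_{AV,2}$ extends meromorphically to $\mathbb{C}^3$ with singularities only on the hyperplanes $s_1+s_3=1-l$ and $s_1+s_2+s_3=2-l$ ($l\in\mathbb{Z}_{\ge0}$); $\zeta_{AV,2}$ denotes this continuation. Also define $$\zeta_{AV,2}^{[2]}(s_1,s_2,s_3)=\sum_{k=2}^\infty\left|\sum_{k/2<m\le k-1}\frac{1}{m^{s_1}(k-m)^{s_2}}\right|^2\frac{1}{k^{s_3}},$$ which converges absolutely when $2\sigma_1+\sigma_3>1$ and $2\sigma_1+2\sigma_2+\sigma_3>3$.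 *)

From Stdlib Require Import Reals.
From Coquelicot Require Import Coquelicot.
Open Scope R_scope.

Definition cpow (n : nat) (s : C) : C :=
  (exp (Re s * ln (INR n)) * cos (Im s * ln (INR n)),
   exp (Re s * ln (INR n)) * sin (Im s * ln (INR n))).

Fixpoint csum (f : nat -> C) (n : nat) : C :=
  match n with
  | O => RtoC 0
  | S n' => Cplus (csum f n') (f n')
  end.

Definition CSeries (a : nat -> C) : C :=
  (Series (fun k => Re (a k)), Series (fun k => Im (a k))).

Definition zetaAV2_inner (s1 s2 s3 : C) (m : nat) : C :=
  csum (fun n => if Nat.ltb 0 n
                 then Cinv (Cmult (Cmult (cpow m s1) (cpow n s2)) (cpow (m + n) s3))
                 else RtoC 0) m.

(* Apostol--Vu double zeta function (value of the double series, which is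
   absolutely convergent in the region where it is used). The m = 0 term is 0. *)
Definition zetaAV2 (s1 s2 s3 : C) : C :=
  CSeries (fun m => zetaAV2_inner s1 s2 s3 m).

Definition zetaAV2sq_inner (s1 s2 : C) (k : nat) : C :=
  csum (fun m => if andb (Nat.ltb k (2 * m)) (Nat.leb (m + 1) k)
                 then Cinv (Cmult (cpow m s1) (cpow (k - m) s2))
                 else RtoC 0) k.

(* zeta^{[2]}_{AV,2}(s1,s2,s3) = sum_{k>=2} |inner k|^2 / k^{s3}.
   (For k = 0, 1 the inner sum is empty, so these terms vanish.) *)
Definition zetaAV2sq (s1 s2 s3 : C) : C :=
  CSeries (fun k => if Nat.leb 2 k
                    then Cmult (RtoC (Cmod (zetaAV2sq_inner s1 s2 k) ^ 2)) (Cinv (cpow k s3))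
                    else RtoC 0).

From Stdlib Require Import Reals Lra Lia.
From Coquelicot Require Import Coquelicot.
Open Scope R_scope.

(* Grouping the double series by [k = m + n] turns [zetaAV2 s1 s2 (sigma3 + i t)] into the
   Dirichlet series [sum_k c_k k^-(sigma3 + i t)], where [c_k] is the inner sum of
   [zetaAV2sq]. Since [sum_k |c_k| k^-sigma3] converges, its truncations converge to it
   uniformly in [t]. Integrating the square modulus of a truncation over [[2, T]], the
   diagonal terms give exactly [(T - 2) sum_k |c_k|^2 k^(-2 sigma3)], and the pair [(k, l)]
   contributes at most [4 a_k a_l / |ln k - ln l|] with [a_k = |c_k| k^-sigma3]; as
   [ln l - ln k >= (l - k) / l], these bounds are summable independently of [T] and of the
   truncation, and uniform convergence carries the estimate to the limit. *)

Ltac case_nat_tests :=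
  repeat match goal with
  | |- context [Nat.ltb ?a ?b] => destruct (Nat.ltb_spec a b)
  | |- context [Nat.leb ?a ?b] => destruct (Nat.leb_spec a b)
  | |- context [Nat.eqb ?a ?b] => destruct (Nat.eqb_spec a b)
  end; simpl.

Fixpoint rsum (f : nat -> R) (n : nat) : R :=
  match n with O => 0 | S n' => rsum f n' + f n' end.

Lemma rsum_ext f g n : (forall i, (i < n)%nat -> f i = g i) -> rsum f n = rsum g n.
Proof. induction n as [|n IH]; intros H; simpl; auto. rewrite IH, H; auto. Qed.

Lemma rsum_plus f g n : rsum (fun i => f i + g i) n = rsum f n + rsum g n.
Proof. induction n; simpl; lra. Qed.

Lemma rsum_minus f g n : rsum (fun i => f i - g i) n = rsum f n - rsum g n.
Proof. induction n; simpl; lra. Qed.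

Lemma rsum_scal_l c f n : rsum (fun i => c * f i) n = c * rsum f n.
Proof. induction n as [|n IH]; simpl; [ring | rewrite IH; ring]. Qed.

Lemma rsum_eq0 f n : (forall i, (i < n)%nat -> f i = 0) -> rsum f n = 0.
Proof. induction n as [|n IH]; intros H; simpl; auto. rewrite IH, H; auto; lra. Qed.

Lemma rsum_le f g n : (forall i, (i < n)%nat -> f i <= g i) -> rsum f n <= rsum g n.
Proof.
  induction n as [|n IH]; intros H; simpl; [lra|].
  pose proof (IH (fun i Hi => H i ltac:(lia))). pose proof (H n ltac:(lia)). lra.
Qed.

Lemma rsum_nonneg f n : (forall i, 0 <= f i) -> 0 <= rsum f n.
Proof. intros H. rewrite <- (rsum_eq0 (fun _ => 0) n) by auto. apply rsum_le; auto. Qed.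

Lemma Rabs_rsum_le f n : Rabs (rsum f n) <= rsum (fun i => Rabs (f i)) n.
Proof.
  induction n; simpl; [rewrite Rabs_R0; lra|].
  eapply Rle_trans; [apply Rabs_triang | lra].
Qed.

Lemma rsum_add f m d : rsum f (m + d) = rsum f m + rsum (fun i => f (m + i)%nat) d.
Proof.
  induction d as [|d IH]; simpl; [rewrite Nat.add_0_r; ring|].
  rewrite Nat.add_succ_r; simpl. rewrite IH; ring.
Qed.

Lemma rsum_le_mono f m n : (forall i, 0 <= f i) -> (m <= n)%nat -> rsum f m <= rsum f n.
Proof.
  intros H Hmn. replace n with (m + (n - m))%nat by lia. rewrite rsum_add.
  pose proof (rsum_nonneg (fun i => f (m + i)%nat) (n - m) (fun i => H _)). lra.
Qed.

Lemma rsum_Sn_l f n : rsum f (S n) = f O + rsum (fun i => f (S i)) n.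
Proof. induction n as [|n IH]; simpl in *; [ring | rewrite IH; ring]. Qed.

Lemma rsum_rev f n : rsum (fun i => f (n - i)%nat) n = rsum (fun i => f (S i)) n.
Proof.
  induction n as [|n IH]; [reflexivity|].
  rewrite rsum_Sn_l, Nat.sub_0_r. simpl (S n - _)%nat. rewrite IH. simpl. ring.
Qed.

Lemma rsum_comm (f : nat -> nat -> R) m n :
  rsum (fun k => rsum (fun l => f k l) n) m = rsum (fun l => rsum (fun k => f k l) m) n.
Proof.
  induction m as [|m IH]; simpl; [symmetry; apply rsum_eq0; auto|].
  rewrite IH, <- rsum_plus. reflexivity.
Qed.

Lemma rsum_mult f g n : rsum f n * rsum g n = rsum (fun k => rsum (fun l => f k * g l) n) n.
Proof.
  rewrite Rmult_comm, <- rsum_scal_l. apply rsum_ext; intros.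
  rewrite rsum_scal_l. ring.
Qed.

Lemma rsum_delta (c : nat -> R) k n :
  rsum (fun l => if Nat.eqb k l then c l else 0) n = if Nat.ltb k n then c k else 0.
Proof.
  induction n as [|n IH]; [destruct k; reflexivity|]. cbn [rsum]. rewrite IH.
  destruct (Nat.eqb_spec k n), (Nat.ltb_spec k n), (Nat.ltb_spec k (S n));
    subst; try lia; ring.
Qed.

Lemma rsum_offset (h : nat -> R) k n :
  rsum (fun l => if Nat.ltb k l then h (l - k)%nat else 0) n =
  rsum (fun j => if Nat.ltb 0 j then h j else 0) (n - k).
Proof.
  induction n as [|n IH]; [reflexivity|]. cbn [rsum]. rewrite IH.
  destruct (Nat.le_gt_cases k n).
  - replace (S n - k)%nat with (S (n - k)) by lia. cbn [rsum].
    destruct (Nat.ltb_spec k n), (Nat.ltb_spec 0 (n - k)); try lia; reflexivity.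
  - replace (S n - k)%nat with O by lia. replace (n - k)%nat with O by lia. cbn [rsum].
    destruct (Nat.ltb_spec k n); [lia | ring].
Qed.

Lemma csum_ext f g n : (forall i, (i < n)%nat -> f i = g i) -> csum f n = csum g n.
Proof. induction n as [|n IH]; intros H; simpl; auto. rewrite IH, H; auto. Qed.

Lemma csum_plus f g n : csum (fun i => Cplus (f i) (g i)) n = Cplus (csum f n) (csum g n).
Proof. induction n as [|n IH]; simpl; [ring | rewrite IH; ring]. Qed.

Lemma csum_mult_r f w n : csum (fun i => Cmult (f i) w) n = Cmult (csum f n) w.
Proof. induction n as [|n IH]; simpl; [ring | rewrite IH; ring]. Qed.

Lemma csum_eq0 f n : (forall i, (i < n)%nat -> f i = RtoC 0) -> csum f n = RtoC 0.
Proof. induction n as [|n IH]; intros H; simpl; auto. rewrite IH, H; auto. ring. Qed.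

Lemma Re_csum f n : Re (csum f n) = rsum (fun i => Re (f i)) n.
Proof. induction n as [|n IH]; simpl; [reflexivity | rewrite <- IH; reflexivity]. Qed.

Lemma Im_csum f n : Im (csum f n) = rsum (fun i => Im (f i)) n.
Proof. induction n as [|n IH]; simpl; [reflexivity | rewrite <- IH; reflexivity]. Qed.

Lemma Cmod_csum_le f n : Cmod (csum f n) <= rsum (fun i => Cmod (f i)) n.
Proof.
  induction n; simpl; [rewrite Cmod_0; lra|].
  eapply Rle_trans; [apply Cmod_triangle | lra].
Qed.

Lemma Cmod_if (b : bool) z : Cmod (if b then z else RtoC 0) = if b then Cmod z else 0.
Proof. destruct b; [reflexivity | apply Cmod_0]. Qed.

Lemma csum_delta (y : nat -> C) j n :
  csum (fun i => if Nat.eqb i j then y i else RtoC 0) n = if Nat.ltb j n then y j else RtoC 0.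
Proof. induction n as [|n IH]; simpl; [reflexivity|]. rewrite IH. case_nat_tests; try lia; subst; ring. Qed.

Lemma div2_bounds N : (2 * Nat.div2 N <= N <= 2 * Nat.div2 N + 1)%nat.
Proof. pose proof (Nat.div2_odd N). destruct (Nat.odd N); simpl in *; lia. Qed.

Lemma exp_le_exp x y : x <= y -> exp x <= exp y.
Proof. intros [H|<-]; [left; apply exp_increasing; auto | lra]. Qed.

Lemma ln_le_sub1 x : 0 < x -> ln x <= x - 1.
Proof. intros. pose proof (exp_ineq1_le (ln x)). rewrite exp_ln in *; lra. Qed.

Lemma ln_sub_ln_ge k l : (1 <= k < l)%nat -> INR (l - k) / INR l <= ln (INR l) - ln (INR k).
Proof.
  intros Hkl. assert (0 < INR k) by (apply lt_0_INR; lia). assert (0 < INR l) by (apply lt_0_INR; lia).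
  pose proof (ln_le_sub1 (INR k / INR l) ltac:(apply Rdiv_lt_0_compat; lra)) as Hln.
  rewrite ln_div in Hln by lra. rewrite minus_INR by lia.
  replace ((INR l - INR k) / INR l) with (- (INR k / INR l - 1)) by (field; lra). lra.
Qed.

Lemma ln_0 : ln 0 = 0.
Proof. unfold ln. destruct (Rlt_dec 0 0); [exfalso; lra | reflexivity]. Qed.

Definition nrpow (x : R) (n : nat) : R := Rpower (INR n) x.

Lemma nrpow_pos x n : 0 < nrpow x n.
Proof. apply exp_pos. Qed.

Lemma nrpow_plus x y n : nrpow (x + y) n = nrpow x n * nrpow y n.
Proof. apply Rpower_plus. Qed.

Lemma nrpow_opp x n : nrpow (- x) n = / nrpow x n.
Proof. apply Rpower_Ropp. Qed.

(* Stdlib's [ln] vanishes off [(0, +oo)], so [0^x] is the junk value [1]. *)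
Lemma nrpow_0_r x : nrpow x 0 = 1.
Proof. unfold nrpow, Rpower. simpl. rewrite ln_0, Rmult_0_r. apply exp_0. Qed.

Lemma nrpow_1_r x : nrpow x 1 = 1.
Proof. unfold nrpow, Rpower. simpl. rewrite ln_1, Rmult_0_r. apply exp_0. Qed.

Lemma nrpow_1_l n : (1 <= n)%nat -> nrpow 1 n = INR n.
Proof. intros. apply Rpower_1, lt_0_INR; auto. Qed.

Lemma nrpow_le_compat_r x m n : 0 <= x -> (1 <= m <= n)%nat -> nrpow x m <= nrpow x n.
Proof.
  intros Hx Hmn. apply Rle_Rpower_l; auto.
  split; [apply lt_0_INR; lia | apply le_INR; lia].
Qed.

Lemma nrpow_le_compat_r_neg x m n : x <= 0 -> (1 <= m <= n)%nat -> nrpow x n <= nrpow x m.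
Proof.
  intros Hx Hmn. pose proof (nrpow_le_compat_r (- x) m n ltac:(lra) Hmn) as H.
  rewrite !nrpow_opp in H. apply Rinv_le_contravar in H; [|apply Rinv_0_lt_compat, nrpow_pos].
  rewrite !Rinv_inv in H. exact H.
Qed.

Lemma nrpow_le_1 x n : x <= 0 -> nrpow x n <= 1.
Proof.
  intros Hx. destruct n; [rewrite nrpow_0_r; lra|].
  rewrite <- (nrpow_1_r x). apply nrpow_le_compat_r_neg; auto; lia.
Qed.


Lemma nrpow_le_doubling x a b : (1 <= a)%nat -> (1 <= b)%nat -> (a <= 2 * b)%nat -> (b <= 2 * a)%nat ->
  nrpow x b <= Rpower 2 (Rabs x) * nrpow x a.
Proof.
  intros Ha Hb Hab Hba. unfold nrpow, Rpower. rewrite <- exp_plus.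
  assert (Hln : forall u v, (1 <= u)%nat -> (v <= 2 * u)%nat -> (1 <= v)%nat -> ln (INR v) <= ln 2 + ln (INR u)).
  { intros u v Hu Hvu Hv. rewrite <- ln_mult by (try lra; apply lt_0_INR; auto).
    apply ln_le; [apply lt_0_INR; auto|]. replace 2 with (INR 2) by reflexivity. rewrite <- mult_INR. apply le_INR; auto. }
  pose proof (Hln a b Ha Hba Hb). pose proof (Hln b a Hb Hab Ha).
  assert (Hd : Rabs (ln (INR b) - ln (INR a)) <= ln 2) by (apply Rabs_le; lra).
  apply exp_le_exp. rewrite Rplus_comm.
  apply Rplus_le_reg_r with (- (x * ln (INR a))).
  replace (x * ln (INR b) + - (x * ln (INR a))) with (x * (ln (INR b) - ln (INR a))) by ring.
  eapply Rle_trans; [apply Rle_abs|]. rewrite Rabs_mult.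
  apply Rle_trans with (Rabs x * ln 2); [apply Rmult_le_compat_l; auto using Rabs_pos | lra].
Qed.

(* From [ln j - ln (j - 1) >= 1/j] and [exp x >= 1 + x]. *)
Lemma nrpow_telescope p j : 1 < p -> (2 <= j)%nat ->
  (p - 1) * nrpow (- p) j <= nrpow (1 - p) (j - 1) - nrpow (1 - p) j.
Proof.
  intros Hp Hj.
  assert (Hj0 : 0 < INR j) by (apply lt_0_INR; lia).
  assert (Hj1 : INR (j - 1) = INR j - 1) by (rewrite minus_INR by lia; simpl; ring).
  assert (Hj1' : 0 < INR (j - 1)) by (apply lt_0_INR; lia).
  set (u := ln (INR j) - ln (INR (j - 1))).
  assert (Hu : / INR j <= u).
  { pose proof (ln_le_sub1 (INR (j - 1) / INR j) ltac:(apply Rdiv_lt_0_compat; lra)) as H.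
    rewrite ln_div in H by lra.
    replace (INR (j - 1) / INR j - 1) with (- / INR j) in H by (rewrite Hj1; field; lra).
    unfold u. lra. }
  assert (Hshift : nrpow (1 - p) (j - 1) = nrpow (1 - p) j * exp ((p - 1) * u)).
  { unfold nrpow, Rpower, u. rewrite <- exp_plus. f_equal. ring. }
  assert (Hone : nrpow (1 - p) j = INR j * nrpow (- p) j).
  { replace (1 - p) with (1 + - p) by ring. rewrite nrpow_plus, nrpow_1_l by lia. reflexivity. }
  pose proof (exp_ineq1_le ((p - 1) * u)). pose proof (nrpow_pos (- p) j).
  rewrite Hshift, Hone.
  assert (INR j * nrpow (- p) j * ((p - 1) * u) >= (p - 1) * nrpow (- p) j).
  { apply Rle_ge. replace ((p - 1) * nrpow (- p) j) with (INR j * nrpow (- p) j * ((p - 1) * / INR j)) by (field; lra).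
    apply Rmult_le_compat_l; [nra|]. apply Rmult_le_compat_l; lra. }
  assert (0 < INR j * nrpow (- p) j) by nra. nra.
Qed.

Definition zeta_bound (p : R) : R := 2 + / (p - 1).

Lemma zeta_bound_pos q : 1 < q -> 0 < zeta_bound q.
Proof. intros. unfold zeta_bound. pose proof (Rinv_0_lt_compat (q - 1) ltac:(lra)). lra. Qed.

Section PSeries.
Variable p : R.
Hypothesis p_gt1 : 1 < p.

Lemma sum_nrpow_shift_le M d : (1 <= M)%nat ->
  rsum (fun i => nrpow (- p) (S M + i)) d <= nrpow (1 - p) M / (p - 1).
Proof.
  intros HM.
  assert (H : (p - 1) * rsum (fun i => nrpow (- p) (S M + i)) d + nrpow (1 - p) (M + d)
              <= nrpow (1 - p) M).
  { induction d as [|d IH]; cbn [rsum]; [rewrite Nat.add_0_r; lra|].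
    pose proof (nrpow_telescope p (S M + d) p_gt1 ltac:(lia)) as Ht.
    replace (S M + d - 1)%nat with (M + d)%nat in Ht by lia.
    replace (M + S d)%nat with (S M + d)%nat by lia. lra. }
  pose proof (nrpow_pos (1 - p) (M + d)).
  apply Rmult_le_reg_l with (p - 1); [lra|].
  replace ((p - 1) * (nrpow (1 - p) M / (p - 1))) with (nrpow (1 - p) M) by (field; lra). lra.
Qed.

Lemma sum_nrpow_gt_le M n : (1 <= M)%nat ->
  rsum (fun i => if Nat.ltb M i then nrpow (- p) i else 0) n <= nrpow (1 - p) M / (p - 1).
Proof.
  intros HM. set (f := fun i => if Nat.ltb M i then nrpow (- p) i else 0).
  assert (Hf : forall i, 0 <= f i) by (intros i; unfold f; destruct (Nat.ltb M i); [left; apply nrpow_pos | lra]).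
  apply Rle_trans with (rsum f (S M + n)); [apply rsum_le_mono; auto; lia|].
  rewrite rsum_add, rsum_eq0, Rplus_0_l.
  - eapply Rle_trans; [|apply (sum_nrpow_shift_le M n HM)].
    apply Req_le, rsum_ext. intros i _. unfold f. destruct (Nat.ltb_spec M (S M + i)); [reflexivity | lia].
  - intros i Hi. unfold f. destruct (Nat.ltb_spec M i); [lia | reflexivity].
Qed.

Lemma sum_nrpow_le n : rsum (nrpow (- p)) n <= zeta_bound p.
Proof.
  apply Rle_trans with (rsum (nrpow (- p)) (2 + n)); [apply rsum_le_mono; [intros; left; apply nrpow_pos | lia]|].
  rewrite rsum_add. cbn [rsum]. rewrite nrpow_0_r, nrpow_1_r.
  pose proof (sum_nrpow_shift_le 1 n (le_n 1)) as H. rewrite nrpow_1_r in H.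
  unfold zeta_bound. unfold Rdiv in H. lra.
Qed.

End PSeries.

Lemma nrpow_vanish x eps : x < 0 -> 0 < eps -> exists K0, forall K, (K0 <= K)%nat -> nrpow x K < eps.
Proof.
  intros Hx He. destruct (INR_unbounded (Rmax 1 (exp (ln eps / x)))) as [K0 HK0].
  exists K0. intros K HK.
  assert (HK1 : exp (ln eps / x) < INR K).
  { eapply Rlt_le_trans; [|apply le_INR, HK]. eapply Rle_lt_trans; [apply Rmax_r | apply HK0]. }
  apply ln_increasing in HK1; [|apply exp_pos]. rewrite ln_exp in HK1.
  unfold nrpow, Rpower. rewrite <- (exp_ln eps) by lra. apply exp_increasing.
  replace (ln eps) with (x * (ln eps / x)) by (field; lra). nra.
Qed.

Lemma Rabs_Im_le_Cmod z : Rabs (Im z) <= Cmod z.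
Proof. eapply Rle_trans; [apply Rmax_r | apply Rmax_Cmod]. Qed.

Lemma Rabs_Re_plus_Rabs_Im_le z : Rabs (Re z) + Rabs (Im z) <= 2 * Cmod z.
Proof. pose proof (re_le_Cmod z). pose proof (Rabs_Im_le_Cmod z). lra. Qed.

Lemma Cmod_le_2 z b : Rabs (Re z) <= b -> Rabs (Im z) <= b -> Cmod z <= 2 * b.
Proof.
  intros Hre Him. eapply Rle_trans; [apply Cmod_2Rmax|].
  assert (Hs : sqrt 2 <= 2) by (rewrite <- (sqrt_square 2) at 2 by lra; apply sqrt_le_1_alt; lra).
  assert (Hm : Rmax (Rabs (Re z)) (Rabs (Im z)) <= b) by (apply Rmax_lub; auto).
  pose proof (Rabs_pos (Re z)).
  apply Rle_trans with (sqrt 2 * b); [apply Rmult_le_compat_l; auto using sqrt_pos|].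
  apply Rmult_le_compat_r; lra.
Qed.

Lemma Cinv_mult (a b : C) : a <> RtoC 0 -> b <> RtoC 0 -> Cinv (Cmult a b) = Cmult (Cinv a) (Cinv b).
Proof. intros. field. auto. Qed.

Lemma Cmod_cpow n s : Cmod (cpow n s) = nrpow (Re s) n.
Proof.
  unfold Cmod, cpow, nrpow, Rpower. simpl.
  pose proof (sin2_cos2 (Im s * ln (INR n))) as H. unfold Rsqr in H.
  set (c := cos _) in *. set (d := sin _) in *. set (e := exp _).
  replace (e * c * (e * c * 1) + e * d * (e * d * 1)) with (e * e) by
    (transitivity (e * e * (d * d + c * c)); [rewrite H | ]; ring).
  apply sqrt_square. left; apply exp_pos.
Qed.

Lemma cpow_neq0 n s : cpow n s <> RtoC 0.
Proof.
  intros H. pose proof (nrpow_pos (Re s) n).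
  rewrite <- Cmod_cpow, H, Cmod_0 in *. lra.
Qed.

Lemma Cinv_cpow n s : Cinv (cpow n s) = cpow n (Copp s).
Proof.
  destruct s as [a b]. unfold cpow, Cinv, Re, Im; simpl.
  set (L := ln (INR n)).
  rewrite !Ropp_mult_distr_l_reverse, exp_Ropp, cos_neg, sin_neg.
  pose proof (sin2_cos2 (b * L)) as H. unfold Rsqr in H.
  set (e := exp (a * L)). set (c := cos (b * L)) in *. set (d := sin (b * L)) in *.
  assert (He : 0 < e) by apply exp_pos.
  replace (e * c * (e * c * 1) + e * d * (e * d * 1)) with (e * e) by
    (transitivity (e * e * (d * d + c * c)); [rewrite H | ]; ring).
  f_equal; field; lra.
Qed.

Lemma Cmod_Cinv_cpow n s : Cmod (Cinv (cpow n s)) = nrpow (- Re s) n.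
Proof. rewrite Cmod_inv by apply cpow_neq0. rewrite Cmod_cpow, nrpow_opp. reflexivity. Qed.

Lemma cpow_mult_neq0 m n a b : Cmult (cpow m a) (cpow n b) <> RtoC 0.
Proof.
  intros H. apply (f_equal Cmod) in H. rewrite Cmod_mult, !Cmod_cpow, Cmod_0 in H.
  pose proof (nrpow_pos (Re a) m). pose proof (nrpow_pos (Re b) n). nra.
Qed.

(** * Regrouping the double series along antidiagonals *)

Section Antidiagonals.
Variable X : nat -> nat -> C.

(* The terms [X m n], [0 < n < m], grouped by [k = m + n < N]; [n < m] reads [k/2 < m],
   as in [zetaAV2sq_inner]. *)
Definition antidiag_sum N : C :=
  csum (fun k => csum (fun m => if andb (Nat.ltb k (2 * m)) (Nat.leb (m + 1) k)
                                then X m (k - m) else RtoC 0) k) N.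

Definition triangle_sum (P : nat -> nat -> bool) N : C :=
  csum (fun m => csum (fun n => if andb (Nat.ltb 0 n) (P m n) then X m n else RtoC 0) m) N.

Lemma antidiag_sum_eq N : antidiag_sum N = triangle_sum (fun m n => Nat.ltb (m + n) N) N.
Proof.
  induction N as [|N IH]; [reflexivity|].
  unfold antidiag_sum, triangle_sum in *. cbn [csum]. rewrite IH.
  rewrite (csum_eq0 (fun n => if andb _ (Nat.ltb (N + n) (S N)) then _ else _)), Cplus_0_r
    by (intros; case_nat_tests; try lia; reflexivity).
  rewrite <- csum_plus. apply csum_ext. intros m Hm.
  transitivity (Cplus (csum (fun n => if andb (Nat.ltb 0 n) (Nat.ltb (m + n) N) then X m n else RtoC 0) m)
    (csum (fun n => if Nat.eqb n (N - m) then (if andb (Nat.ltb 0 n) (Nat.ltb n m) then X m n else RtoC 0)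
                    else RtoC 0) m)).
  - f_equal. rewrite csum_delta. case_nat_tests; try lia; reflexivity.
  - rewrite <- csum_plus. apply csum_ext. intros n Hn. case_nat_tests; try lia; subst; ring.
Qed.

Lemma triangle_sum_split N :
  csum (fun m => csum (fun n => if Nat.ltb 0 n then X m n else RtoC 0) m) N =
  Cplus (triangle_sum (fun m n => Nat.ltb (m + n) N) N) (triangle_sum (fun m n => Nat.leb N (m + n)) N).
Proof.
  unfold triangle_sum. rewrite <- csum_plus. apply csum_ext. intros m Hm.
  rewrite <- csum_plus. apply csum_ext. intros n Hn. case_nat_tests; try lia; ring.
Qed.

End Antidiagonals.

Lemma sum_n_rsum (a : nat -> R) n : sum_n a n = rsum a (S n).
Proof. induction n as [|n IH]; [rewrite sum_O; simpl; ring | rewrite sum_Sn, IH; reflexivity]. Qed.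

Lemma is_lim_seq_Rabs_le (w : nat -> R) (l K : R) :
  is_lim_seq w l -> (forall n, Rabs (w n) <= K) -> Rabs l <= K.
Proof. intros Hl Hw. exact (is_lim_seq_le _ _ _ _ Hw (is_lim_seq_abs _ _ Hl) (is_lim_seq_const K)). Qed.

Section DominatedSeries.
Variables (u v : nat -> R) (Bv : R).
Hypothesis u_le_v : forall m, Rabs (u m) <= v m.
Hypothesis v_sum_le : forall n, rsum v n <= Bv.

Lemma is_lim_seq_rsum : is_lim_seq (rsum u) (Series u).
Proof.
  assert (Hv0 : forall m, 0 <= v m) by (intros m; pose proof (Rabs_pos (u m)); specialize (u_le_v m); lra).
  assert (Ev : ex_series v).
  { destruct (ex_finite_lim_seq_incr (sum_n v) Bv) as [l Hl].
    - intros n. rewrite !sum_n_rsum. cbn [rsum]. specialize (Hv0 (S n)). lra.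
    - intros n. rewrite sum_n_rsum. apply v_sum_le.
    - exists l. exact Hl. }
  assert (Eu : ex_series u).
  { apply ex_series_Rabs, (@ex_series_le R_AbsRing R_CompleteNormedModule _ v); auto.
    intros n. unfold norm; simpl. unfold abs; simpl. rewrite Rabs_Rabsolu. apply u_le_v. }
  apply is_lim_seq_incr_1. eapply is_lim_seq_ext; [|exact (Series_correct u Eu)].
  intros n; simpl. apply sum_n_rsum.
Qed.

Lemma Series_minus_rsum_le N tau :
  (forall d, rsum (fun i => v (N + i)%nat) d <= tau) -> Rabs (Series u - rsum u N) <= tau.
Proof.
  intros Htail.
  apply (is_lim_seq_Rabs_le (fun d => rsum u (d + N) - rsum u N)).
  - apply (is_lim_seq_minus' _ _ _ _ (proj1 (is_lim_seq_incr_n _ N _) is_lim_seq_rsum) (is_lim_seq_const _)).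
  - intros d. rewrite Nat.add_comm, rsum_add.
    replace (rsum u N + rsum (fun i => u (N + i)%nat) d - rsum u N) with (rsum (fun i => u (N + i)%nat) d) by ring.
    eapply Rle_trans; [apply Rabs_rsum_le|]. eapply Rle_trans; [|apply (Htail d)].
    apply rsum_le. intros; apply u_le_v.
Qed.

End DominatedSeries.

Lemma is_RInt_rsum (f : nat -> R -> R) (I : nat -> R) a b n :
  (forall i, is_RInt (f i) a b (I i)) -> is_RInt (fun t => rsum (fun i => f i t) n) a b (rsum I n).
Proof.
  intros H. induction n as [|n IH]; simpl.
  - pose proof (is_RInt_const (V := R_NormedModule) a b 0) as Hc.
    change (scal (b - a) 0) with ((b - a) * 0) in Hc. rewrite Rmult_0_r in Hc. exact Hc.
  - apply (is_RInt_plus _ _ a b _ _ IH (H n)).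
Qed.

Lemma filterlim_Cmod2_unif (F : nat -> R -> C) (f : R -> C) (B : R) :
  (forall N t, Cmod (F N t) <= B) ->
  (forall eps, 0 < eps -> exists N0, forall N t, (N0 <= N)%nat -> Cmod (Cminus (f t) (F N t)) <= eps) ->
  filterlim (fun N t => Cmod (F N t) ^ 2) eventually
    (locally (T := fct_UniformSpace R R_UniformSpace) (fun t => Cmod (f t) ^ 2)).
Proof.
  intros HB Hunif. apply filterlim_locally. intros [eps He]. simpl.
  assert (HB0 : 0 <= B) by (pose proof (HB O 0); pose proof (Cmod_ge_0 (F O 0)); lra).
  set (e0 := Rmin 1 (eps / (2 * B + 2))).
  assert (He0 : 0 < e0) by (apply Rmin_pos; [lra | apply Rdiv_lt_0_compat; lra]).
  assert (He1 : e0 <= 1) by apply Rmin_l.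
  assert (He2 : e0 * (2 * B + 1) < eps).
  { apply Rlt_le_trans with (eps / (2 * B + 2) * (2 * B + 2)); [|right; field; lra].
    pose proof (Rmin_r 1 (eps / (2 * B + 2))). fold e0 in H.
    apply Rle_lt_trans with (eps / (2 * B + 2) * (2 * B + 1)); [apply Rmult_le_compat_r; lra|].
    apply Rmult_lt_compat_l; [apply Rdiv_lt_0_compat |]; lra. }
  destruct (Hunif e0 He0) as [N0 HN0]. exists N0. intros N HN t.
  unfold ball; simpl. unfold AbsRing_ball, abs, minus, plus, opp; simpl.
  pose proof (HN0 N t HN) as Hd. pose proof (HB N t) as Hb.
  set (z := f t) in *. set (w := F N t) in *.
  assert (Hz : Cmod z <= Cmod (Cminus z w) + Cmod w).
  { replace z with (Cplus (Cminus z w) w) at 1 by ring. apply Cmod_triangle. }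
  assert (Hw : Cmod w <= Cmod (Cminus z w) + Cmod z).
  { replace w with (Cplus (Copp (Cminus z w)) z) at 1 by ring.
    eapply Rle_trans; [apply Cmod_triangle | rewrite Cmod_opp; lra]. }
  pose proof (Cmod_ge_0 z). pose proof (Cmod_ge_0 w).
  replace (Cmod w * (Cmod w * 1) + - (Cmod z * (Cmod z * 1))) with
    ((Cmod w - Cmod z) * (Cmod w + Cmod z)) by ring.
  rewrite Rabs_mult, (Rabs_right (Cmod w + Cmod z)) by lra.
  assert (Rabs (Cmod w - Cmod z) <= e0) by (apply Rabs_le; lra).
  apply Rle_lt_trans with (e0 * (2 * B + 1)); [apply Rmult_le_compat; auto using Rabs_pos; lra | exact He2].
Qed.

(** * The mean square *)

Section MeanSquare.
Variables (s1 s2 : C) (sig3 eta : R).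
Let rho := Re s2 + eta.
Let p := Re s1 + sig3 - eta.
Hypothesis eta_ge0 : 0 <= eta.
Hypothesis rho_gt1 : 1 < rho.
Hypothesis p_gt1 : 1 < p.

Definition coef (k : nat) : C := zetaAV2sq_inner s1 s2 k.

Definition term (m n : nat) (t : R) : C :=
  Cinv (Cmult (Cmult (cpow m s1) (cpow n s2)) (cpow (m + n) (sig3, t))).

Definition alpha (k : nat) : R := nrpow (- sig3) k * Cmod (coef k).

Definition coef_const : R := Rpower 2 (Rabs (Re s1)) * zeta_bound rho.

Definition row_const : R := Rpower 2 (Rabs sig3) * zeta_bound rho.

Lemma coef_const_pos : 0 < coef_const.
Proof. apply Rmult_lt_0_compat; [apply exp_pos | apply zeta_bound_pos; auto]. Qed.

Lemma row_const_pos : 0 < row_const.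
Proof. apply Rmult_lt_0_compat; [apply exp_pos | apply zeta_bound_pos; auto]. Qed.

(* The extra factor [k^eta] makes the [n]-sums converge even when [Re s2 <= 1]. *)
Lemma nrpow_s2_le j k : (1 <= j <= k)%nat -> nrpow (- Re s2) j <= nrpow eta k * nrpow (- rho) j.
Proof.
  intros Hjk. replace (- Re s2) with (eta + - rho) by (unfold rho; ring). rewrite nrpow_plus.
  apply Rmult_le_compat_r; [left; apply nrpow_pos | apply nrpow_le_compat_r; auto].
Qed.

Lemma Cmod_coef_le k : Cmod (coef k) <= coef_const * nrpow (eta - Re s1) k.
Proof.
  set (c := Rpower 2 (Rabs (Re s1)) * nrpow (- Re s1) k * nrpow eta k).
  assert (Hc : 0 < c) by (unfold c; repeat apply Rmult_lt_0_compat; apply exp_pos).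
  unfold coef, zetaAV2sq_inner. eapply Rle_trans; [apply Cmod_csum_le|].
  apply Rle_trans with (rsum (fun m => c * nrpow (- rho) (S (k - m - 1))) k).
  { apply rsum_le. intros m Hm. rewrite Cmod_if.
    destruct (Nat.ltb_spec k (2 * m)), (Nat.leb_spec (m + 1) k); simpl;
      try (pose proof (nrpow_pos (- rho) (S (k - m - 1))); nra).
    rewrite Cinv_mult, Cmod_mult, !Cmod_Cinv_cpow by apply cpow_neq0.
    replace (S (k - m - 1)) with (k - m)%nat by lia.
    pose proof (nrpow_le_doubling (- Re s1) k m ltac:(lia) ltac:(lia) ltac:(lia) ltac:(lia)).
    pose proof (nrpow_s2_le (k - m) k ltac:(lia)).
    pose proof (nrpow_pos (- Re s1) m). pose proof (nrpow_pos (- Re s2) (k - m)).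
    rewrite Rabs_Ropp in *. unfold c.
    apply Rle_trans with (Rpower 2 (Rabs (Re s1)) * nrpow (- Re s1) k * (nrpow eta k * nrpow (- rho) (k - m)));
      [apply Rmult_le_compat; lra | right; ring]. }
  rewrite rsum_scal_l.
  replace (rsum (fun m => nrpow (- rho) (S (k - m - 1))) k) with (rsum (fun j => nrpow (- rho) (S j)) k)
    by (rewrite <- rsum_rev; apply rsum_ext; intros; do 2 f_equal; lia).
  assert (Hs : rsum (fun j => nrpow (- rho) (S j)) k <= zeta_bound rho).
  { eapply Rle_trans; [|apply (sum_nrpow_le rho rho_gt1 (S k))].
    rewrite rsum_Sn_l. pose proof (nrpow_pos (- rho) 0). lra. }
  unfold coef_const. replace (eta - Re s1) with (- Re s1 + eta) by ring. rewrite nrpow_plus.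
  apply Rle_trans with (c * zeta_bound rho); [apply Rmult_le_compat_l; lra | unfold c; right; ring].
Qed.

Lemma alpha_nonneg k : 0 <= alpha k.
Proof. unfold alpha. pose proof (nrpow_pos (- sig3) k). pose proof (Cmod_ge_0 (coef k)). nra. Qed.

Lemma alpha_le k : alpha k <= coef_const * nrpow (- p) k.
Proof.
  unfold alpha. pose proof (Cmod_coef_le k). pose proof (nrpow_pos (- sig3) k).
  replace (- p) with (- sig3 + (eta - Re s1)) by (unfold p; ring). rewrite nrpow_plus.
  apply Rle_trans with (nrpow (- sig3) k * (coef_const * nrpow (eta - Re s1) k));
    [apply Rmult_le_compat_l; lra | right; ring].
Qed.

Lemma Cmod_term m n t :
  Cmod (term m n t) = nrpow (- Re s1) m * nrpow (- Re s2) n * nrpow (- sig3) (m + n).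
Proof.
  unfold term.
  rewrite !Cinv_mult, !Cmod_mult, !Cmod_Cinv_cpow; auto using cpow_neq0, cpow_mult_neq0.
Qed.

Lemma row_le m t : rsum (fun n => if Nat.ltb 0 n then Cmod (term m n t) else 0) m <= row_const * nrpow (- p) m.
Proof.
  set (c := Rpower 2 (Rabs sig3) * nrpow (- Re s1) m * nrpow eta m * nrpow (- sig3) m).
  assert (Hc : 0 < c) by (unfold c; repeat apply Rmult_lt_0_compat; apply exp_pos).
  apply Rle_trans with (rsum (fun n => c * nrpow (- rho) n) m).
  { apply rsum_le. intros n Hn. destruct (Nat.ltb_spec 0 n); [|pose proof (nrpow_pos (- rho) n); nra].
    rewrite Cmod_term.
    pose proof (nrpow_le_doubling (- sig3) m (m + n) ltac:(lia) ltac:(lia) ltac:(lia) ltac:(lia)).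
    pose proof (nrpow_s2_le n m ltac:(lia)).
    pose proof (nrpow_pos (- Re s1) m). pose proof (nrpow_pos (- Re s2) n). pose proof (nrpow_pos (- sig3) (m + n)).
    rewrite Rabs_Ropp in *. unfold c.
    apply Rle_trans with (nrpow (- Re s1) m * (nrpow eta m * nrpow (- rho) n) * (Rpower 2 (Rabs sig3) * nrpow (- sig3) m));
      [apply Rmult_le_compat; try nra; apply Rmult_le_compat_l; lra | right; ring]. }
  rewrite rsum_scal_l. pose proof (sum_nrpow_le rho rho_gt1 m).
  unfold row_const. replace (- p) with (- Re s1 + eta + - sig3) by (unfold p; ring). rewrite !nrpow_plus.
  apply Rle_trans with (c * zeta_bound rho); [apply Rmult_le_compat_l; lra | unfold c; right; ring].
Qed.

Definition dirpoly (N : nat) (t : R) : C :=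
  csum (fun k => Cmult (coef k) (Cinv (cpow k (sig3, t)))) N.

Lemma zetaAV2_partial_split N t :
  csum (zetaAV2_inner s1 s2 (sig3, t)) N =
  Cplus (dirpoly N t) (triangle_sum (fun m n => term m n t) (fun m n => Nat.leb N (m + n)) N).
Proof.
  assert (Hd : antidiag_sum (fun m n => term m n t) N = dirpoly N t).
  { apply csum_ext. intros k _. unfold coef, zetaAV2sq_inner. rewrite <- csum_mult_r.
    apply csum_ext. intros m _. case_nat_tests; [|ring..].
    unfold term. replace (m + (k - m))%nat with k by lia. apply Cinv_mult; auto using cpow_neq0, cpow_mult_neq0. }
  rewrite <- Hd, antidiag_sum_eq, <- triangle_sum_split. reflexivity.
Qed.

Lemma Cmod_inner_le m t : Cmod (zetaAV2_inner s1 s2 (sig3, t) m) <= row_const * nrpow (- p) m.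
Proof.
  eapply Rle_trans; [apply Cmod_csum_le | eapply Rle_trans; [|apply (row_le m t)]].
  right. apply rsum_ext. intros. rewrite Cmod_if. reflexivity.
Qed.

(* Terms with [m + n >= N] and [n < m] have [m > N/2]. *)
Lemma Cmod_upper_triangle_le N t : (2 <= N)%nat ->
  Cmod (triangle_sum (fun m n => term m n t) (fun m n => Nat.leb N (m + n)) N)
  <= row_const * (nrpow (1 - p) (Nat.div2 N) / (p - 1)).
Proof.
  intros HN. pose proof (div2_bounds N).
  eapply Rle_trans; [apply Cmod_csum_le|].
  eapply Rle_trans.
  { apply rsum_le with (g := fun m => row_const * (if Nat.ltb (Nat.div2 N) m then nrpow (- p) m else 0)).
    intros m Hm. destruct (Nat.ltb_spec (Nat.div2 N) m).
    - eapply Rle_trans; [apply Cmod_csum_le | eapply Rle_trans; [|apply (row_le m t)]].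
      apply rsum_le. intros n Hn. rewrite Cmod_if. case_nat_tests; try lra. apply Cmod_ge_0.
    - rewrite csum_eq0, Cmod_0, Rmult_0_r; [lra|]. intros n Hn. case_nat_tests; try lia; reflexivity. }
  rewrite rsum_scal_l. apply Rmult_le_compat_l; [left; apply row_const_pos|].
  apply sum_nrpow_gt_le; [auto | lia].
Qed.

Lemma Cmod_zetaAV2_sub_partial_le N t : (2 <= N)%nat ->
  Cmod (Cminus (zetaAV2 s1 s2 (sig3, t)) (csum (zetaAV2_inner s1 s2 (sig3, t)) N))
  <= 2 * (row_const * (nrpow (1 - p) (N - 1) / (p - 1))).
Proof.
  intros HN. set (u := zetaAV2_inner s1 s2 (sig3, t)).
  assert (Htail : forall w : C -> R, (forall z, Rabs (w z) <= Cmod z) ->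
            Rabs (Series (fun m => w (u m)) - rsum (fun m => w (u m)) N)
            <= row_const * (nrpow (1 - p) (N - 1) / (p - 1))).
  { intros w Hw. apply Series_minus_rsum_le with (v := fun m => row_const * nrpow (- p) m)
      (Bv := row_const * zeta_bound p).
    - intros m. eapply Rle_trans; [apply Hw | apply Cmod_inner_le].
    - intros n. rewrite rsum_scal_l. apply Rmult_le_compat_l; [left; apply row_const_pos | apply sum_nrpow_le; auto].
    - intros d. rewrite rsum_scal_l. apply Rmult_le_compat_l; [left; apply row_const_pos|].
      pose proof (sum_nrpow_shift_le p p_gt1 (N - 1) d ltac:(lia)) as H.
      replace (S (N - 1)) with N in H by lia. exact H. }
  apply Cmod_le_2.
  - change (Re (Cminus (zetaAV2 s1 s2 (sig3, t)) (csum u N))) with (Series (fun m => Re (u m)) - Re (csum u N)).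
    rewrite Re_csum. apply Htail, re_le_Cmod.
  - change (Im (Cminus (zetaAV2 s1 s2 (sig3, t)) (csum u N))) with (Series (fun m => Im (u m)) - Im (csum u N)).
    rewrite Im_csum. apply Htail, Rabs_Im_le_Cmod.
Qed.

Lemma dirpoly_unif_approx eps : 0 < eps ->
  exists N0, forall N t, (N0 <= N)%nat -> Cmod (Cminus (zetaAV2 s1 s2 (sig3, t)) (dirpoly N t)) <= eps.
Proof.
  intros He. pose proof row_const_pos.
  set (th := eps * (p - 1) / (3 * row_const)).
  assert (Hth : 0 < th) by (apply Rdiv_lt_0_compat; nra).
  destruct (nrpow_vanish (1 - p) th ltac:(lra) Hth) as [K HK].
  exists (2 * K + 2)%nat. intros N t HN.
  pose proof (div2_bounds N).
  assert (Hsmall : forall M, (K <= M)%nat -> row_const * (nrpow (1 - p) M / (p - 1)) <= eps / 3).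
  { intros M HM. pose proof (HK M HM).
    replace (eps / 3) with (row_const * (th / (p - 1))) by (unfold th; field; lra).
    apply Rmult_le_compat_l; [lra|]. apply Rmult_le_compat_r; [left; apply Rinv_0_lt_compat|]; lra. }
  pose proof (Hsmall (N - 1)%nat ltac:(lia)). pose proof (Hsmall (Nat.div2 N) ltac:(lia)).
  pose proof (Cmod_zetaAV2_sub_partial_le N t ltac:(lia)).
  pose proof (Cmod_upper_triangle_le N t ltac:(lia)).
  rewrite zetaAV2_partial_split in *.
  set (z := zetaAV2 s1 s2 (sig3, t)) in *. set (U := triangle_sum _ _ N) in *.
  replace (Cminus z (dirpoly N t)) with (Cplus (Cminus z (Cplus (dirpoly N t) U)) U) by ring.
  eapply Rle_trans; [apply Cmod_triangle | lra].
Qed.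

Lemma Cmod_dirpoly_le N t : Cmod (dirpoly N t) <= coef_const * zeta_bound p.
Proof.
  eapply Rle_trans; [apply Cmod_csum_le|].
  apply Rle_trans with (rsum (fun k => coef_const * nrpow (- p) k) N).
  - apply rsum_le. intros k _. rewrite Cmod_mult, Cmod_Cinv_cpow, Rmult_comm. apply alpha_le.
  - rewrite rsum_scal_l. apply Rmult_le_compat_l; [left; apply coef_const_pos | apply sum_nrpow_le; auto].
Qed.

Lemma coef_lt2 k : (k < 2)%nat -> coef k = RtoC 0.
Proof. intros. apply csum_eq0. intros. case_nat_tests; try lia; reflexivity. Qed.

Definition coef_pair (k l : nat) : C := Cmult (coef k) (Cconj (coef l)).

Definition freq (k l : nat) : R := ln (INR k) - ln (INR l).

Definition cross (k l : nat) (t : R) : R :=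
  nrpow (- sig3) k * nrpow (- sig3) l *
  (Re (coef_pair k l) * cos (t * freq k l) + Im (coef_pair k l) * sin (t * freq k l)).

Lemma Cmod2_dirpoly N t : Cmod (dirpoly N t) ^ 2 = rsum (fun k => rsum (fun l => cross k l t) N) N.
Proof.
  rewrite Cmod2_alt. unfold dirpoly. rewrite Re_csum, Im_csum, <- !Rsqr_pow2. unfold Rsqr.
  rewrite !rsum_mult, <- rsum_plus. apply rsum_ext. intros k _. rewrite <- rsum_plus. apply rsum_ext. intros l _.
  rewrite !Cinv_cpow. unfold cross, coef_pair, freq, cpow, nrpow, Rpower. simpl.
  replace (t * (ln (INR k) - ln (INR l))) with (t * ln (INR k) - t * ln (INR l)) by ring.
  rewrite cos_minus, sin_minus, <- !Ropp_mult_distr_l, !cos_neg, !sin_neg. ring.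
Qed.

(* [freq k l = 0] only for [k = l] or [{k, l} = {0, 1}]. *)
Definition cross_int (k l : nat) (T : R) : R :=
  let w := freq k l in
  nrpow (- sig3) k * nrpow (- sig3) l *
  (if Req_EM_T w 0 then (T - 2) * Re (coef_pair k l)
   else (Re (coef_pair k l) * (sin (T * w) - sin (2 * w)) - Im (coef_pair k l) * (cos (T * w) - cos (2 * w))) / w).

Lemma is_RInt_cross k l T : is_RInt (cross k l) 2 T (cross_int k l T).
Proof.
  unfold cross_int, cross. set (r := nrpow (- sig3) k * nrpow (- sig3) l).
  set (P := Re (coef_pair k l)). set (Q := Im (coef_pair k l)).
  destruct (Req_EM_T (freq k l) 0) as [Hw|Hw].
  - replace (r * ((T - 2) * P)) with ((T - 2) * (r * P)) by ring.
    change ((T - 2) * (r * P)) with (scal (V := R_NormedModule) (T - 2) (r * P)).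
    eapply is_RInt_ext; [|apply is_RInt_const]. intros x _. rewrite Hw, Rmult_0_r, cos_0, sin_0. simpl. ring.
  - set (w := freq k l) in *.
    set (G := fun t => r * ((P * sin (t * w) - Q * cos (t * w)) / w)).
    replace (r * ((P * (sin (T * w) - sin (2 * w)) - Q * (cos (T * w) - cos (2 * w))) / w))
      with (minus (G T) (G 2)) by (unfold G, minus, plus, opp; simpl; field; auto).
    apply (is_RInt_derive (V := R_CompleteNormedModule)).
    + intros x _. unfold G. auto_derive; [auto | field; auto].
    + intros x _. apply (ex_derive_continuous (K := R_AbsRing) (V := R_NormedModule)). auto_derive. auto.
Qed.

Lemma is_RInt_Cmod2_dirpoly N T :
  is_RInt (fun t => Cmod (dirpoly N t) ^ 2) 2 T (rsum (fun k => rsum (fun l => cross_int k l T) N) N).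
Proof.
  eapply is_RInt_ext; [|apply is_RInt_rsum; intros k; apply is_RInt_rsum; intros l; apply is_RInt_cross].
  intros. symmetry. apply Cmod2_dirpoly.
Qed.

Lemma cross_int_diag k T : cross_int k k T = (T - 2) * alpha k ^ 2.
Proof.
  unfold cross_int, freq. destruct (Req_EM_T _ 0) as [_|H]; [|exfalso; apply H; ring].
  unfold coef_pair, alpha. rewrite <- Cmod2_conj. simpl. ring.
Qed.

Lemma cross_int_lt2 k l T : (k < 2 \/ l < 2)%nat -> cross_int k l T = 0.
Proof.
  intros Hkl. assert (Hc : coef_pair k l = RtoC 0).
  { unfold coef_pair. destruct Hkl as [H|H]; rewrite (coef_lt2 _ H); [ring|].
    replace (Cconj (RtoC 0)) with (RtoC 0) by (unfold Cconj, RtoC; simpl; f_equal; lra). ring. }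
  unfold cross_int. rewrite Hc. simpl. destruct (Req_EM_T _ 0); [ring | unfold Rdiv; ring].
Qed.

Lemma Rabs_cross_int_le k l T : freq k l <> 0 ->
  Rabs (cross_int k l T) <= 4 * (alpha k * alpha l) / Rabs (freq k l).
Proof.
  intros Hw. unfold cross_int. destruct (Req_EM_T (freq k l) 0) as [|_]; [contradiction|].
  set (w := freq k l) in *. set (P := Re (coef_pair k l)). set (Q := Im (coef_pair k l)).
  assert (Haw : 0 < Rabs w) by (apply Rabs_pos_lt; auto).
  assert (Hsin : Rabs (sin (T * w) - sin (2 * w)) <= 2)
    by (pose proof (SIN_bound (T * w)); pose proof (SIN_bound (2 * w)); apply Rabs_le; lra).
  assert (Hcos : Rabs (cos (T * w) - cos (2 * w)) <= 2)
    by (pose proof (COS_bound (T * w)); pose proof (COS_bound (2 * w)); apply Rabs_le; lra).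
  assert (HPQ : Rabs P + Rabs Q <= 2 * (Cmod (coef k) * Cmod (coef l))).
  { rewrite <- (Cmod_conj (coef l)), <- Cmod_mult. apply Rabs_Re_plus_Rabs_Im_le. }
  assert (HN : Rabs (P * (sin (T * w) - sin (2 * w)) - Q * (cos (T * w) - cos (2 * w))) <= 4 * (Cmod (coef k) * Cmod (coef l))).
  { unfold Rminus at 1. eapply Rle_trans; [apply Rabs_triang|]. rewrite Rabs_Ropp, !Rabs_mult.
    pose proof (Rabs_pos P). pose proof (Rabs_pos Q).
    pose proof (Rabs_pos (sin (T * w) - sin (2 * w))). pose proof (Rabs_pos (cos (T * w) - cos (2 * w))). nra. }
  pose proof (nrpow_pos (- sig3) k). pose proof (nrpow_pos (- sig3) l).
  unfold Rdiv. rewrite !Rabs_mult, Rabs_inv, (Rabs_right (nrpow _ k)), (Rabs_right (nrpow _ l)) by lra.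
  unfold alpha. pose proof (Rinv_0_lt_compat _ Haw).
  rewrite <- (Rmult_assoc (nrpow (- sig3) k * nrpow (- sig3) l)). apply Rmult_le_compat_r; [lra|].
  apply Rle_trans with (nrpow (- sig3) k * nrpow (- sig3) l * (4 * (Cmod (coef k) * Cmod (coef l))));
    [apply Rmult_le_compat_l; [nra | exact HN] | right; ring].
Qed.

(* [alpha l alpha k / (ln l - ln k) <~ (k l)^-p l / (l - k)] for [k < l]; half of the excess decay
   [l^(1-p)] is spent on each of [k] and [l - k] to make the double sum converge. *)
Definition offdiag (k l : nat) : R :=
  if Nat.ltb k l then nrpow (- (p + (p - 1) / 2)) k * nrpow (- (1 + (p - 1) / 2)) (l - k) else 0.

Lemma offdiag_nonneg k l : 0 <= offdiag k l.
Proof.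
  unfold offdiag. destruct (Nat.ltb k l); [|lra].
  apply Rmult_le_pos; left; apply nrpow_pos.
Qed.

Lemma alpha_pair_le k l : (2 <= k < l)%nat -> alpha l * alpha k / freq l k <= coef_const ^ 2 * offdiag k l.
Proof.
  intros Hkl. set (q := (p - 1) / 2).
  assert (Hl : 0 < INR l) by (apply lt_0_INR; lia).
  assert (Hlk : 0 < INR (l - k)) by (apply lt_0_INR; lia).
  pose proof (ln_sub_ln_ge k l ltac:(lia)) as HD. fold (freq l k) in HD.
  assert (Hw : 0 < freq l k) by (eapply Rlt_le_trans; [apply (Rdiv_lt_0_compat _ _ Hlk Hl) | exact HD]).
  pose proof (alpha_le l). pose proof (alpha_le k). pose proof (alpha_nonneg l). pose proof (alpha_nonneg k).
  pose proof (nrpow_pos (- p) l). pose proof (nrpow_pos (- p) k). pose proof coef_const_pos.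
  apply Rle_trans with (coef_const * nrpow (- p) l * (coef_const * nrpow (- p) k) * (INR l / INR (l - k))).
  { unfold Rdiv. apply Rmult_le_compat; [nra | left; apply Rinv_0_lt_compat; lra | apply Rmult_le_compat; lra|].
    replace (INR l * / INR (l - k)) with (/ (INR (l - k) / INR l)) by (field; lra).
    apply Rinv_le_contravar; [apply Rdiv_lt_0_compat|]; lra. }
  assert (Hsplit : nrpow (- p) l * INR l = nrpow (- q) l * nrpow (- q) l).
  { rewrite <- (nrpow_1_l l), <- !nrpow_plus by lia. f_equal. unfold q. lra. }
  assert (Hinv : / INR (l - k) = nrpow (-1) (l - k))
    by (replace (-1) with (- (1)) by ring; rewrite nrpow_opp, nrpow_1_l by lia; reflexivity).
  pose proof (nrpow_le_compat_r_neg (- q) k l ltac:(unfold q; lra) ltac:(lia)).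
  pose proof (nrpow_le_compat_r_neg (- q) (l - k) l ltac:(unfold q; lra) ltac:(lia)).
  pose proof (nrpow_pos (- q) l). pose proof (nrpow_pos (- 1) (l - k)).
  unfold offdiag. destruct (Nat.ltb_spec k l); [|lia].
  replace (- (p + (p - 1) / 2)) with (- p + - q) by (unfold q; ring).
  replace (- (1 + (p - 1) / 2)) with (- q + -1) by (unfold q; ring). rewrite !nrpow_plus.
  replace (coef_const * nrpow (- p) l * (coef_const * nrpow (- p) k) * (INR l / INR (l - k))) with
    (coef_const ^ 2 * nrpow (- p) k * (nrpow (- p) l * INR l) * / INR (l - k)) by (field; lra).
  rewrite Hsplit, Hinv.
  apply Rle_trans with (coef_const ^ 2 * nrpow (- p) k * (nrpow (- q) k * nrpow (- q) (l - k)) * nrpow (-1) (l - k));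
    [| right; ring].
  apply Rmult_le_compat_r; [lra|]. apply Rmult_le_compat_l; [nra|]. apply Rmult_le_compat; lra.
Qed.

Lemma cross_int_err k l T :
  Rabs (cross_int k l T - (if Nat.eqb k l then (T - 2) * alpha k ^ 2 else 0))
  <= 4 * coef_const ^ 2 * (offdiag k l + offdiag l k).
Proof.
  pose proof (offdiag_nonneg k l). pose proof (offdiag_nonneg l k). pose proof (pow2_ge_0 coef_const).
  destruct (Nat.eqb_spec k l) as [<-|Hne].
  { rewrite cross_int_diag, Rminus_diag, Rabs_R0. nra. }
  rewrite Rminus_0_r.
  destruct (Nat.lt_ge_cases k 2) as [Hk|Hk]; [rewrite cross_int_lt2, Rabs_R0 by auto; nra|].
  destruct (Nat.lt_ge_cases l 2) as [Hl|Hl]; [rewrite cross_int_lt2, Rabs_R0 by auto; nra|].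
  assert (Hord : forall a b, (2 <= a < b)%nat ->
            Rabs (cross_int a b T) <= 4 * coef_const ^ 2 * offdiag a b /\
            Rabs (cross_int b a T) <= 4 * coef_const ^ 2 * offdiag a b).
  { intros a b Hab.
    assert (Hf : 0 < freq b a) by (unfold freq; apply Rlt_0_minus, ln_increasing;
                                   [apply lt_0_INR | apply lt_INR]; lia).
    assert (Hf' : freq a b = - freq b a) by (unfold freq; ring).
    pose proof (alpha_pair_le a b Hab).
    pose proof (Rabs_cross_int_le a b T ltac:(lra)). pose proof (Rabs_cross_int_le b a T ltac:(lra)).
    rewrite Hf', Rabs_Ropp, (Rabs_right (freq b a)) in * by lra. unfold Rdiv in *.
    split; (eapply Rle_trans; [eassumption|]); nra. }
  assert (Hcases : (k < l \/ l < k)%nat) by lia. destruct Hcases as [Hkl|Hkl].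
  - destruct (Hord k l ltac:(lia)). nra.
  - destruct (Hord l k ltac:(lia)). nra.
Qed.

Lemma sum_offdiag_le N :
  rsum (fun k => rsum (fun l => offdiag k l) N) N <= zeta_bound (p + (p - 1) / 2) * zeta_bound (1 + (p - 1) / 2).
Proof.
  set (p1 := p + (p - 1) / 2). set (p2 := 1 + (p - 1) / 2).
  assert (Hp1 : 1 < p1) by (unfold p1; lra). assert (Hp2 : 1 < p2) by (unfold p2; lra).
  apply Rle_trans with (rsum (fun k => nrpow (- p1) k * zeta_bound p2) N).
  - apply rsum_le. intros k _. unfold offdiag. fold p1 p2.
    replace (rsum _ N) with (nrpow (- p1) k * rsum (fun l => if Nat.ltb k l then nrpow (- p2) (l - k) else 0) N)
      by (rewrite <- rsum_scal_l; apply rsum_ext; intros; destruct (Nat.ltb k i); ring).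
    apply Rmult_le_compat_l; [left; apply nrpow_pos|]. rewrite rsum_offset.
    eapply Rle_trans; [|apply (sum_nrpow_le p2 Hp2 (N - k))].
    apply rsum_le. intros j _. destruct (Nat.ltb 0 j); [lra | left; apply nrpow_pos].
  - rewrite (rsum_ext _ (fun k => zeta_bound p2 * nrpow (- p1) k)) by (intros; ring).
    rewrite rsum_scal_l. pose proof (sum_nrpow_le p1 Hp1 N). pose proof (zeta_bound_pos p2 Hp2). nra.
Qed.

Definition mean_square_const : R :=
  8 * coef_const ^ 2 * (zeta_bound (p + (p - 1) / 2) * zeta_bound (1 + (p - 1) / 2)).

Lemma sum_cross_int_err N T :
  Rabs (rsum (fun k => rsum (fun l => cross_int k l T) N) N - (T - 2) * rsum (fun k => alpha k ^ 2) N)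
  <= mean_square_const.
Proof.
  replace ((T - 2) * rsum (fun k => alpha k ^ 2) N) with
    (rsum (fun k => rsum (fun l => if Nat.eqb k l then (T - 2) * alpha k ^ 2 else 0) N) N).
  2:{ rewrite <- rsum_scal_l. apply rsum_ext. intros k Hk.
      rewrite (rsum_ext _ (fun l => if Nat.eqb k l then (T - 2) * alpha l ^ 2 else 0))
        by (intros; destruct (Nat.eqb_spec k i); subst; reflexivity).
      rewrite rsum_delta. destruct (Nat.ltb_spec k N); [reflexivity | lia]. }
  rewrite <- rsum_minus. eapply Rle_trans; [apply Rabs_rsum_le|].
  eapply Rle_trans.
  { apply rsum_le. intros k _. rewrite <- rsum_minus. eapply Rle_trans; [apply Rabs_rsum_le|].
    apply rsum_le. intros l _. apply cross_int_err. }
  replace (rsum _ N) with (4 * coef_const ^ 2 * (rsum (fun k => rsum (fun l => offdiag k l) N) N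
                                                + rsum (fun k => rsum (fun l => offdiag l k) N) N)).
  2:{ rewrite <- rsum_plus, <- rsum_scal_l. apply rsum_ext. intros.
      rewrite <- rsum_plus, <- rsum_scal_l. reflexivity. }
  rewrite (rsum_comm (fun k l => offdiag l k)).
  pose proof (sum_offdiag_le N). pose proof (pow2_ge_0 coef_const).
  unfold mean_square_const. nra.
Qed.

Lemma is_lim_seq_sum_alpha2 : is_lim_seq (rsum (fun k => alpha k ^ 2)) (Series (fun k => alpha k ^ 2)).
Proof.
  apply is_lim_seq_rsum with (v := fun k => coef_const ^ 2 * nrpow (- p) k) (Bv := coef_const ^ 2 * zeta_bound p).
  - intros k. pose proof (alpha_le k). pose proof (alpha_nonneg k). pose proof (nrpow_pos (- p) k).
    pose proof (nrpow_le_1 (- p) k ltac:(lra)). pose proof coef_const_pos.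
    rewrite Rabs_right by (apply Rle_ge, pow_le; auto).
    apply Rle_trans with ((coef_const * nrpow (- p) k) ^ 2); [apply pow_incr; auto | nra].
  - intros n. rewrite rsum_scal_l. apply Rmult_le_compat_l; [apply pow2_ge_0 | apply sum_nrpow_le; auto].
Qed.

Lemma mean_square_err T :
  Rabs (RInt (fun t => Cmod (zetaAV2 s1 s2 (sig3, t)) ^ 2) 2 T - (T - 2) * Series (fun k => alpha k ^ 2))
  <= mean_square_const.
Proof.
  destruct (filterlim_RInt (fun N t => Cmod (dirpoly N t) ^ 2) 2 T eventually _ _
              (fun N => rsum (fun k => rsum (fun l => cross_int k l T) N) N)
              (fun N => is_RInt_Cmod2_dirpoly N T)
              (filterlim_Cmod2_unif _ _ _ Cmod_dirpoly_le dirpoly_unif_approx)) as [I [HI HInt]].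
  rewrite (is_RInt_unique _ _ _ _ HInt).
  apply (is_lim_seq_Rabs_le _ _ _ (is_lim_seq_minus' _ _ _ _ HI
           (is_lim_seq_scal_l _ (T - 2) _ is_lim_seq_sum_alpha2))).
  intros n. apply sum_cross_int_err.
Qed.

Lemma zetaAV2sq_eq : zetaAV2sq s1 s2 (RtoC (2 * sig3)) = RtoC (Series (fun k => alpha k ^ 2)).
Proof.
  unfold zetaAV2sq, CSeries, RtoC. f_equal.
  - apply Series_ext. intros k. destruct (Nat.leb_spec 2 k).
    + rewrite Cinv_cpow. unfold cpow, alpha, nrpow, Rpower. fold (coef k). simpl.
      rewrite Ropp_0, !Rmult_0_l, cos_0.
      replace (- (2 * sig3) * ln (INR k)) with (- sig3 * ln (INR k) + - sig3 * ln (INR k)) by ring.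
      rewrite exp_plus. ring.
    + unfold alpha. rewrite coef_lt2, Cmod_0 by lia. simpl. ring.
  - transitivity (Series (fun _ => 0 * 0)); [|rewrite Series_scal_l; ring].
    apply Series_ext. intros k. destruct (Nat.leb 2 k); [|simpl; ring].
    rewrite Cinv_cpow. unfold cpow. simpl. rewrite Ropp_0, !Rmult_0_l, sin_0. ring.
Qed.

Lemma mean_square_asymptotic : exists K T0 : R, forall T : R, T >= T0 ->
  Cmod (Cminus (RtoC (RInt (fun t3 => Cmod (zetaAV2 s1 s2 (sig3, t3)) ^ 2) 2 T))
               (Cmult (zetaAV2sq s1 s2 (RtoC (2 * sig3))) (RtoC T))) <= K.
Proof.
  set (D := Series (fun k => alpha k ^ 2)).
  exists (mean_square_const + 2 * Rabs D), 0. intros T _. rewrite zetaAV2sq_eq. fold D.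
  set (I := RInt (fun t3 => Cmod (zetaAV2 s1 s2 (sig3, t3)) ^ 2) 2 T).
  replace (Cminus (RtoC I) (Cmult (RtoC D) (RtoC T))) with (RtoC ((I - (T - 2) * D) + -2 * D))
    by (unfold RtoC, Cminus, Cmult, Cplus, Copp; simpl; f_equal; ring).
  rewrite Cmod_R. eapply Rle_trans; [apply Rabs_triang|].
  rewrite Rabs_mult. replace (Rabs (-2)) with 2 by (rewrite Rabs_left by lra; ring).
  pose proof (mean_square_err T). fold D I in H. lra.
Qed.

End MeanSquare.

Theorem theorem1p1 (s1 s2 : C) (sigma3 : R) :
  Re s1 + sigma3 > 1 ->
  Re s1 + Re s2 + sigma3 > 2 ->
  exists K T0 : R, forall T : R, T >= T0 ->
    Cmod (Cminus (RtoC (RInt (fun t3 => Cmod (zetaAV2 s1 s2 (sigma3, t3)) ^ 2) 2 T))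
                 (Cmult (zetaAV2sq s1 s2 (RtoC (2 * sigma3))) (RtoC T))) <= K.
Proof.
  intros H1 H2.
  set (a := Re s1 + sigma3 - 1). set (b := Re s1 + Re s2 + sigma3 - 2).
  assert (Hab : 0 < Rmin a b) by (apply Rmin_case; unfold a, b; lra).
  pose proof (Rmin_l a b). pose proof (Rmin_r a b).
  pose proof (Rmax_l 0 (1 - Re s2)). pose proof (Rmax_r 0 (1 - Re s2)).
  apply (mean_square_asymptotic s1 s2 sigma3 (Rmax 0 (1 - Re s2) + Rmin a b / 2)); [lra | lra |].
  apply Rmax_case_strong; unfold a, b in *; lra.
Qed.
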